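(* Let $I=[0,1]$ and let $H:I\to\mathbb{R}$ be a Darboux function. Then there is a countable set $D\subseteq I$ with the following property: for every continuous function $F:I\to\mathbb{R}$, if for all $a,b\in D$ and every real $t$ with $H(a)+F(a)<t<H(b)+F(b)$ there is some $c$ between $a$ and $b$ with $H(c)+F(c)=t$, then $H+F$ is Darboux.
   Context: A function $H:I\to\mathbb{R}$ is Darboux if the image under $H$ of every interval contained in $I$ is an interval. *)

From Stdlib Require Import Reals.
Open Scope R_scope.

Definition I01 (x : R) : Prop := 0 <= x <= 1.

Definition is_interval (S : R -> Prop) : Prop :=
  forall x y z, S x -> S y -> x <= z <= y -> S z.

Definition image (H : R -> R) (S : R -> Prop) : R -> Prop :=
  fun y => exists x, S x /\ H x = y.

Definition Darboux_on_I (H : R -> R) : Prop :=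
  forall J : R -> Prop, is_interval J -> (forall x, J x -> I01 x) ->
    is_interval (image H J).

Definition countable_set (D : R -> Prop) : Prop :=
  exists f : R -> nat, forall x y, D x -> D y -> f x = f y -> x = y.

Definition continuous_on_I (F : R -> R) : Prop :=
  forall x, I01 x -> forall eps, eps > 0 -> exists delta, delta > 0 /\
    forall y, I01 y -> Rabs (y - x) < delta -> Rabs (F y - F x) < eps.

(* The graph of any function f on a set S is separable: picking one point of
   the graph in each square of the grids of mesh 1/k that meets it gives a
   countable D with {(a, f a) | a in D} dense in the graph.  Take this D for
   H on [0,1].  If H x + F x < z < H y + F y, the Darboux property of H gives
   points strictly between x and y, arbitrarily close to x, at which H is close
   to H x; approximating them by points of D leaves room to stay between x and
   y.  So there are a, b in D between x and y, near x and y respectively, with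
   H + F below z at a and above z at b (continuity of F), and the hypothesis
   on D gives the value z between a and b. *)
From Stdlib Require Import Reals Lra Lia ZArith ClassicalEpsilon.
From Stdlib Require Cantor.
Open Scope R_scope.

Ltac piecewise_lra :=
  unfold Rmin, Rmax, Rabs in *;
  repeat match goal with
  | |- context [Rle_dec ?a ?b] => destruct (Rle_dec a b)
  | h : context [Rle_dec ?a ?b] |- _ => destruct (Rle_dec a b)
  | |- context [Rcase_abs ?a] => destruct (Rcase_abs a)
  | h : context [Rcase_abs ?a] |- _ => destruct (Rcase_abs a)
  end; lra.

Lemma countable_set_indexed (P : nat -> Prop) (g : nat -> R) :
  countable_set (fun x => exists n, P n /\ g n = x).
Proof.
  exists (fun x => epsilon (inhabits 0%nat) (fun n => P n /\ g n = x)).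
  intros x y Dx Dy E.
  destruct (epsilon_spec (inhabits 0%nat) _ Dx) as [_ Ex].
  destruct (epsilon_spec (inhabits 0%nat) _ Dy) as [_ Ey].
  rewrite E in Ex; congruence.
Qed.

Definition Z_of_nat_pair (p : nat * nat) : Z := (Z.of_nat (fst p) - Z.of_nat (snd p))%Z.

(* Cell number [n] is the square of half-side [1/k] centred at [(i/k, m/k)];
   integers are coded as differences of two naturals. *)
Definition grid_cell (n : nat) : nat * Z * Z :=
  let '(k, r) := Cantor.of_nat n in
  let '(i, m) := Cantor.of_nat r in
  (k, Z_of_nat_pair (Cantor.of_nat i), Z_of_nat_pair (Cantor.of_nat m)).

Lemma grid_cell_surjective k i m : exists n, grid_cell n = (k, i, m).
Proof.
  assert (Z_of_nat_pair_surj : forall z, exists p, Z_of_nat_pair p = z).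
  { intro z; exists (Z.to_nat z, Z.to_nat (- z)); unfold Z_of_nat_pair; simpl; lia. }
  destruct (Z_of_nat_pair_surj i) as [pi Ei], (Z_of_nat_pair_surj m) as [pm Em].
  exists (Cantor.to_nat (k, Cantor.to_nat (Cantor.to_nat pi, Cantor.to_nat pm))).
  unfold grid_cell; rewrite !Cantor.cancel_of_to; congruence.
Qed.

Section GraphNet.

Variables (f : R -> R) (S : R -> Prop).

Definition in_graph_cell (n : nat) (p : R) : Prop :=
  let '(k, i, m) := grid_cell n in
  S p /\ Rabs (p * INR k - IZR i) <= 1 /\ Rabs (f p * INR k - IZR m) <= 1.

Definition graph_cell_point (n : nat) : R := epsilon (inhabits 0) (in_graph_cell n).

Definition graph_net (x : R) : Prop :=
  exists n, (exists p, in_graph_cell n p) /\ graph_cell_point n = x.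

Lemma graph_net_countable : countable_set graph_net.
Proof. apply countable_set_indexed. Qed.

Lemma in_graph_cell_point n :
  (exists p, in_graph_cell n p) -> in_graph_cell n (graph_cell_point n).
Proof. apply epsilon_spec. Qed.

Lemma graph_net_sub x : graph_net x -> S x.
Proof.
  intros [n [Hn <-]]; generalize (in_graph_cell_point n Hn); unfold in_graph_cell.
  destruct (grid_cell n) as [[k i] m]; tauto.
Qed.

Lemma close_of_same_cell (K r u v : R) (z : Z) : 0 < r -> 2 < K * r ->
  Rabs (u * K - IZR z) <= 1 -> Rabs (v * K - IZR z) <= 1 -> Rabs (u - v) < r.
Proof.
  intros Hr HK Hu Hv.
  assert (Huv : Rabs (u - v) * K <= 2).
  { assert (0 < K) by nra.
    rewrite <- (Rabs_pos_eq K), <- Rabs_mult by lra.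
    revert Hu Hv; piecewise_lra. }
  nra.
Qed.

Lemma Rabs_sub_Zfloor_le_1 (x : R) : Rabs (x - IZR (Zfloor x)) <= 1.
Proof. generalize (Zfloor_bound x); piecewise_lra. Qed.

Lemma graph_net_dense p r : S p -> 0 < r ->
  exists a, graph_net a /\ Rabs (a - p) < r /\ Rabs (f a - f p) < r.
Proof.
  intros Sp Hr.
  destruct (INR_archimed r 2 Hr) as [k Hk].
  destruct (grid_cell_surjective k (Zfloor (p * INR k)) (Zfloor (f p * INR k))) as [n En].
  assert (Cp : in_graph_cell n p).
  { unfold in_graph_cell; rewrite En; repeat split; auto using Rabs_sub_Zfloor_le_1. }
  exists (graph_cell_point n); split; [exists n; split; eauto|].
  generalize (in_graph_cell_point n (ex_intro _ p Cp)); revert Cp.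
  unfold in_graph_cell; rewrite En; intros [_ [Cx Cy]] [_ [Ax Ay]].
  split; eapply close_of_same_cell; eauto.
Qed.

End GraphNet.

Lemma exists_between_near (u w d : R) : u <> w -> 0 < d ->
  exists v, Rmin u w < v < Rmax u w /\ Rabs (v - u) < d.
Proof.
  intros Nuw Hd; destruct (Rlt_or_le u w).
  - exists (u + Rmin d (w - u) / 2); piecewise_lra.
  - exists (u - Rmin d (u - w) / 2); piecewise_lra.
Qed.

Lemma is_interval_segment (x y : R) : is_interval (fun c => Rmin x y <= c <= Rmax x y).
Proof. intros a b c; lra. Qed.

Section DarbouxH.

Variable H : R -> R.
Hypothesis DH : Darboux_on_I H.

Lemma Darboux_near_value x q d : I01 x -> I01 q -> x <> q -> 0 < d ->
  exists a, Rmin x q <= a <= Rmax x q /\ a <> x /\ Rabs (H a - H x) < d.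
Proof.
  intros Ix Iq Nxq Hd.
  destruct (Req_dec (H x) (H q)) as [E | N].
  { exists q; split; [piecewise_lra |]; split; [congruence |].
    rewrite E, Rminus_diag, Rabs_R0; exact Hd. }
  destruct (exists_between_near (H x) (H q) d N Hd) as [v [Bv Dv]].
  set (J := fun c => Rmin x q <= c <= Rmax x q).
  assert (Himg : is_interval (image H J)).
  { apply DH; [apply is_interval_segment | intros c Hc; unfold J, I01 in *; piecewise_lra]. }
  assert (Hx : image H J (H x)) by (exists x; split; [unfold J; piecewise_lra | auto]).
  assert (Hq : image H J (H q)) by (exists q; split; [unfold J; piecewise_lra | auto]).
  destruct (Rlt_or_le (H x) (H q)).
  - destruct (Himg _ _ v Hx Hq) as [a [Ba Ea]]; [piecewise_lra|].
    exists a; split; [exact Ba |]; split; [intros ->; piecewise_lra | rewrite Ea; exact Dv].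
  - destruct (Himg _ _ v Hq Hx) as [a [Ba Ea]]; [piecewise_lra|].
    exists a; split; [exact Ba |]; split; [intros ->; piecewise_lra | rewrite Ea; exact Dv].
Qed.

Lemma Darboux_graph_point_between x y d : I01 x -> I01 y -> x <> y -> 0 < d ->
  exists p, Rmin x y < p < Rmax x y /\ Rabs (p - x) < d /\ Rabs (H p - H x) < d.
Proof.
  intros Ix Iy Nxy Hd.
  destruct (exists_between_near x y d Nxy Hd) as [q [Bq Dq]].
  assert (Iq : I01 q) by (unfold I01 in *; piecewise_lra).
  destruct (Darboux_near_value x q d Ix Iq) as [p [Bp [Np Dp]]]; [piecewise_lra | exact Hd |].
  exists p; repeat split; try exact Dp; piecewise_lra.
Qed.

Lemma graph_net_between x y d : I01 x -> I01 y -> x <> y -> 0 < d ->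
  exists a, graph_net H I01 a /\ Rmin x y <= a <= Rmax x y /\
    Rabs (a - x) < d /\ Rabs (H a - H x) < d.
Proof.
  intros Ix Iy Nxy Hd.
  destruct (Darboux_graph_point_between x y d Ix Iy Nxy Hd) as [p [Bp [Dp Hp]]].
  assert (Ip : I01 p) by (unfold I01 in *; piecewise_lra).
  set (r := Rmin (Rmin (p - Rmin x y) (Rmax x y - p))
                 (Rmin (d - Rabs (p - x)) (d - Rabs (H p - H x)))).
  assert (Hr : 0 < r /\ r <= p - Rmin x y /\ r <= Rmax x y - p /\
               r <= d - Rabs (p - x) /\ r <= d - Rabs (H p - H x)) by (unfold r; piecewise_lra).
  clearbody r.
  destruct (graph_net_dense H I01 p r Ip) as [a [Da [Ra Rh]]]; [tauto |].
  exists a; split; [exact Da |].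
  clear - Hr Ra Rh; repeat split; piecewise_lra.
Qed.

End DarbouxH.

Lemma intermediate_value_Darboux_plus_continuous (H F : R -> R) x y z :
  Darboux_on_I H -> continuous_on_I F ->
  (forall a b t, graph_net H I01 a -> graph_net H I01 b ->
     H a + F a < t < H b + F b ->
     exists c, Rmin a b <= c <= Rmax a b /\ H c + F c = t) ->
  I01 x -> I01 y -> H x + F x < z < H y + F y ->
  exists c, Rmin x y <= c <= Rmax x y /\ H c + F c = z.
Proof.
  intros DH FC Hnet Ix Iy Hz.
  assert (Nxy : x <> y) by (intros ->; lra).
  set (d := Rmin (z - (H x + F x)) (H y + F y - z) / 2).
  assert (Hd : 0 < d /\ 2 * d <= z - (H x + F x) /\ 2 * d <= H y + F y - z)
    by (unfold d; piecewise_lra).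
  clearbody d.
  destruct (FC x Ix d (proj1 Hd)) as [ex [Hex Cx]], (FC y Iy d (proj1 Hd)) as [ey [Hey Cy]].
  destruct (graph_net_between H DH x y (Rmin d ex) Ix Iy Nxy) as [a [Da [Ba [Ax AHx]]]];
    [piecewise_lra |].
  destruct (graph_net_between H DH y x (Rmin d ey) Iy Ix (not_eq_sym Nxy))
    as [b [Db [Bb [By BHy]]]];
    [piecewise_lra |].
  assert (AFx : Rabs (F a - F x) < d)
    by (apply Cx; [exact (graph_net_sub _ _ _ Da) | clear - Ax; piecewise_lra]).
  assert (BFy : Rabs (F b - F y) < d)
    by (apply Cy; [exact (graph_net_sub _ _ _ Db) | clear - By; piecewise_lra]).
  destruct (Hnet a b z Da Db) as [c [Bc Ec]];
    [clear - Hd AHx BHy AFx BFy; piecewise_lra |].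
  exists c; split; [clear - Ba Bb Bc; piecewise_lra | exact Ec].
Qed.

Lemma Darboux_on_I_of_intermediate_values (G : R -> R) :
  (forall x y z, I01 x -> I01 y -> G x < z < G y ->
     exists c, Rmin x y <= c <= Rmax x y /\ G c = z) ->
  Darboux_on_I G.
Proof.
  intros IVP J HJ JI u w z [x [Jx <-]] [y [Jy <-]] Hz.
  destruct (Req_dec z (G x)) as [-> | Nx]; [exists x; auto |].
  destruct (Req_dec z (G y)) as [-> | Ny]; [exists y; auto |].
  destruct (IVP x y z (JI x Jx) (JI y Jy)) as [c [Bc Ec]]; [lra |].
  exists c; split; [| exact Ec].
  destruct (Rle_dec x y).
  - apply (HJ x y); auto; piecewise_lra.
  - apply (HJ y x); auto; piecewise_lra.
Qed.

Theorem mainTheorem8 :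
  forall H : R -> R, Darboux_on_I H ->
  exists D : R -> Prop,
    countable_set D /\ (forall x, D x -> I01 x) /\
    forall F : R -> R, continuous_on_I F ->
      (forall a b t, D a -> D b ->
         H a + F a < t < H b + F b ->
         exists c, Rmin a b <= c <= Rmax a b /\ H c + F c = t) ->
      Darboux_on_I (fun x => H x + F x).
Proof.
  intros H DH.
  exists (graph_net H I01).
  split; [apply graph_net_countable |].
  split; [apply graph_net_sub |].
  intros F FC Hnet.
  apply Darboux_on_I_of_intermediate_values.
  intros x y z Ix Iy Hz.
  exact (intermediate_value_Darboux_plus_continuous H F x y z DH FC Hnet Ix Iy Hz).
Qed.
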